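(* The category of pastures has arbitrary products: for any set $I$ and pastures $P_i$ ($i\in I$) there is a pasture $\prod_{i\in I}P_i$ with morphisms $\pi_j:\prod_{i\in I}P_i\to P_j$ ($j\in I$) such that for every pasture $P'$ and morphisms $f_i:P'\to P_i$ ($i\in I$) there is a unique morphism $f_*:P'\to\prod_{i\in I}P_i$ with $\pi_j\circ f_*=f_j$ for all $j\in I$.
   Context: A pasture is a multiplicative monoid $P$ with a zero element $0$ (absorbing: $0\cdot x=0$ for all $x$) such that $P^\times=P\setminus\{0\}$ is an abelian group under the multiplication, together with an involution $x\mapsto -x$ of $P$ fixing $0$, and a subset $N_P\subseteq P^3$ (the nullset; one writes $a+b+c=0$ to mean $(a,b,c)\in N_P$) such that: (1) $N_P$ is invariant under permutations of the three coordinates; (2) if $a+b+c=0$ then $da+db+dc=0$ for every $d\in P$; (3) $a+b+0=0$ if and only if $a=-b$. A morphism of pastures $f:P_1\to P_2$ is a multiplicative map with $f(0)=0$, $f(1)=1$, $f(-a)=-f(a)$ for all $a$, and such that $f(a)+f(b)+f(c)=0$ in $N_{P_2}$ whenever $a+b+c=0$ in $N_{P_1}$. *)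

Record pasture := Pasture {
  pcar :> Type;
  pzero : pcar;
  pone : pcar;
  pmul : pcar -> pcar -> pcar;
  pneg : pcar -> pcar;
  pnull : pcar -> pcar -> pcar -> Prop;
  pmulA : forall x y z, pmul x (pmul y z) = pmul (pmul x y) z;
  pmul1l : forall x, pmul pone x = x;
  pmul1r : forall x, pmul x pone = x;
  pmul0l : forall x, pmul pzero x = pzero;
  pmul0r : forall x, pmul x pzero = pzero;
  (* P^x = P \ {0} is an abelian group under multiplication *)
  pone_neq0 : pone <> pzero;
  pmul_neq0 : forall x y, x <> pzero -> y <> pzero -> pmul x y <> pzero;
  pmulC_units : forall x y, x <> pzero -> y <> pzero -> pmul x y = pmul y x;
  pinv_ex : forall x, x <> pzero -> exists y, y <> pzero /\ pmul x y = pone;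
  pnegK : forall x, pneg (pneg x) = x;
  pneg0 : pneg pzero = pzero;
  pnull_perm : forall a b c, pnull a b c ->
     pnull a c b /\ pnull b a c /\ pnull b c a /\ pnull c a b /\ pnull c b a;
  pnull_mul : forall a b c d, pnull a b c -> pnull (pmul d a) (pmul d b) (pmul d c);
  pnull_zero : forall a b, pnull a b pzero <-> a = pneg b
}.

Arguments pzero {p}.
Arguments pone {p}.
Arguments pmul {p}.
Arguments pneg {p}.
Arguments pnull {p}.

Definition is_pasture_morphism (P1 P2 : pasture) (f : P1 -> P2) : Prop :=
  (forall a b, f (pmul a b) = pmul (f a) (f b)) /\
  f pzero = pzero /\
  f pone = pone /\
  (forall a, f (pneg a) = pneg (f a)) /\
  (forall a b c, pnull a b c -> pnull (f a) (f b) (f c)).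

(* The product is {0} together with the tuples of units (x_i) of the P_i, with
   multiplication, negation and nullset taken componentwise; the projections are
   the coordinate maps.  A morphism of pastures sends units to units, so every
   family f_i : P' -> P_i yields the map sending x <> 0 to the tuple (f_i x) and
   0 to 0.  It is a morphism, and it is the only one over the f_i, because a
   morphism into the product is determined by its coordinates and by which
   elements it sends to 0, and morphisms send to 0 exactly 0. *)

From Stdlib Require Import ClassicalEpsilon FunctionalExtensionality ProofIrrelevance.

Definition no_lone_nonzero {T : Type} (z a b c : T) : Prop :=
  (a = z -> b = z -> c = z) /\ (a = z -> c = z -> b = z) /\ (b = z -> c = z -> a = z).

Section PastureFacts.
Variable R : pasture.

Lemma pneg_eq0 (a : R) : pneg a = pzero <-> a = pzero.
Proof.
  split; intro E.
  - rewrite <- (pnegK R a), E. apply pneg0.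
  - rewrite E. apply pneg0.
Qed.

Lemma pmul_eq0 (a b : R) : pmul a b = pzero <-> a = pzero \/ b = pzero.
Proof.
  split.
  - intro E. destruct (classic (a = pzero)) as [|Ha]; [now left|].
    destruct (classic (b = pzero)) as [|Hb]; [now right|].
    exfalso. exact (pmul_neq0 R a b Ha Hb E).
  - intros [-> | ->]; [apply pmul0l | apply pmul0r].
Qed.

Lemma pnull_no_lone_nonzero (a b c : R) : pnull a b c -> no_lone_nonzero pzero a b c.
Proof.
  intro H. destruct (pnull_perm R a b c H) as (_ & Hbac & _ & Hcab & _).
  repeat split; intros E1 E2; subst.
  - apply pnull_zero in Hcab. rewrite Hcab. apply pneg0.
  - apply pnull_zero in Hbac. rewrite Hbac. apply pneg0.
  - apply pnull_zero in H. rewrite H. apply pneg0.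
Qed.

End PastureFacts.

Section MorphismFacts.
Variables P1 P2 : pasture.
Variable f : P1 -> P2.
Hypothesis Hf : is_pasture_morphism P1 P2 f.

Lemma morph_mul (a b : P1) : f (pmul a b) = pmul (f a) (f b).
Proof. apply Hf. Qed.

Lemma morph0 : f pzero = pzero.
Proof. apply Hf. Qed.

Lemma morph1 : f pone = pone.
Proof. apply Hf. Qed.

Lemma morph_neg (a : P1) : f (pneg a) = pneg (f a).
Proof. apply Hf. Qed.

Lemma morph_null (a b c : P1) : pnull a b c -> pnull (f a) (f b) (f c).
Proof. apply Hf. Qed.

Lemma morph_eq0 (x : P1) : f x = pzero <-> x = pzero.
Proof.
  split; intro E.
  - destruct (classic (x = pzero)) as [|Hx]; [assumption|].
    destruct (pinv_ex P1 x Hx) as [y [_ Hxy]].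
    exfalso. apply (pone_neq0 P2).
    rewrite <- morph1, <- Hxy, morph_mul, E. apply pmul0l.
  - rewrite E. exact morph0.
Qed.

End MorphismFacts.

Section ProductPasture.
Variable I : Type.
Variable P : I -> pasture.

Definition unit_tuple := {u : forall i, P i | forall i, u i <> pzero}.

Definition prod_car := option unit_tuple.

Definition coord (a : prod_car) (i : I) : P i :=
  match a with None => pzero | Some u => proj1_sig u i end.

Lemma coord_neq0 (a : prod_car) i : a <> None -> coord a i <> pzero.
Proof. destruct a as [u|]; [intros _; apply (proj2_sig u) | congruence]. Qed.

Lemma prod_ext (a b : prod_car) :
  (a = None <-> b = None) -> (forall i, coord a i = coord b i) -> a = b.
Proof.
  destruct a as [[u hu]|], b as [[v hv]|]; simpl; intros Hz Hc.
  - assert (u = v) by (apply functional_extensionality_dep; exact Hc). subst v.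
    f_equal. f_equal. apply proof_irrelevance.
  - now destruct (proj2 Hz).
  - now destruct (proj1 Hz).
  - reflexivity.
Qed.

Definition tuple_of (u : forall i, P i) (hu : forall i, u i <> pzero) : prod_car :=
  Some (exist _ u hu).

Definition prod_one : prod_car := tuple_of (fun i => pone) (fun i => pone_neq0 (P i)).

Definition prod_mul (a b : prod_car) : prod_car :=
  match a, b with
  | Some u, Some v =>
      tuple_of (fun i => pmul (proj1_sig u i) (proj1_sig v i))
               (fun i => pmul_neq0 _ _ _ (proj2_sig u i) (proj2_sig v i))
  | _, _ => None
  end.

Definition prod_neg (a : prod_car) : prod_car :=
  match a with
  | None => None
  | Some u =>
      tuple_of (fun i => pneg (proj1_sig u i))
               (fun i u_i0 => proj2_sig u i (proj1 (pneg_eq0 _ _) u_i0))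
  end.

(* The second conjunct follows from the first unless I is empty, where it is
   what makes axiom (3) hold in the two-element product. *)
Definition prod_null (a b c : prod_car) : Prop :=
  (forall i, pnull (coord a i) (coord b i) (coord c i)) /\ no_lone_nonzero None a b c.

Lemma coord_one i : coord prod_one i = pone.
Proof. reflexivity. Qed.

Lemma coord_mul a b i : coord (prod_mul a b) i = pmul (coord a i) (coord b i).
Proof. destruct a, b; simpl; rewrite ?pmul0l, ?pmul0r; reflexivity. Qed.

Lemma coord_neg a i : coord (prod_neg a) i = pneg (coord a i).
Proof. destruct a; simpl; [reflexivity | symmetry; apply pneg0]. Qed.

Lemma prod_mul_eq0 a b : prod_mul a b = None <-> a = None \/ b = None.
Proof. destruct a, b; simpl; intuition discriminate. Qed.

Lemma prod_neg_eq0 a : prod_neg a = None <-> a = None.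
Proof. destruct a; simpl; intuition discriminate. Qed.

Lemma prod_one_neq0 : prod_one <> None.
Proof. discriminate. Qed.

Lemma prod_mulA x y z : prod_mul x (prod_mul y z) = prod_mul (prod_mul x y) z.
Proof.
  apply prod_ext.
  - rewrite !prod_mul_eq0. tauto.
  - intro i. rewrite !coord_mul. apply pmulA.
Qed.

Lemma prod_mul1l x : prod_mul prod_one x = x.
Proof.
  apply prod_ext.
  - rewrite prod_mul_eq0. pose proof prod_one_neq0. tauto.
  - intro i. rewrite coord_mul, coord_one. apply pmul1l.
Qed.

Lemma prod_mul1r x : prod_mul x prod_one = x.
Proof.
  apply prod_ext.
  - rewrite prod_mul_eq0. pose proof prod_one_neq0. tauto.
  - intro i. rewrite coord_mul, coord_one. apply pmul1r.
Qed.

Lemma prod_mul0l x : prod_mul None x = None.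
Proof. reflexivity. Qed.

Lemma prod_mul0r x : prod_mul x None = None.
Proof. now destruct x. Qed.

Lemma prod_mul_neq0 x y : x <> None -> y <> None -> prod_mul x y <> None.
Proof. rewrite prod_mul_eq0. tauto. Qed.

Lemma prod_mulC_units x y : x <> None -> y <> None -> prod_mul x y = prod_mul y x.
Proof.
  intros Hx Hy. apply prod_ext.
  - rewrite !prod_mul_eq0. tauto.
  - intro i. rewrite !coord_mul.
    apply pmulC_units; apply coord_neq0; assumption.
Qed.

Lemma prod_inv_ex x : x <> None -> exists y, y <> None /\ prod_mul x y = prod_one.
Proof.
  intro Hx.
  pose (inv i := constructive_indefinite_description _
                   (pinv_ex (P i) (coord x i) (coord_neq0 x i Hx))).
  exists (tuple_of (fun i => proj1_sig (inv i)) (fun i => proj1 (proj2_sig (inv i)))).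
  split; [discriminate|].
  apply prod_ext.
  - rewrite prod_mul_eq0. split; [intros [E | E]; [contradiction | discriminate] | discriminate].
  - intro i. rewrite coord_mul, coord_one. exact (proj2 (proj2_sig (inv i))).
Qed.

Lemma prod_negK x : prod_neg (prod_neg x) = x.
Proof.
  apply prod_ext.
  - rewrite !prod_neg_eq0. tauto.
  - intro i. rewrite !coord_neg. apply pnegK.
Qed.

Lemma prod_neg0 : prod_neg None = None.
Proof. reflexivity. Qed.

Lemma prod_null_perm a b c : prod_null a b c ->
  prod_null a c b /\ prod_null b a c /\ prod_null b c a /\
  prod_null c a b /\ prod_null c b a.
Proof.
  intros [H Hz]. unfold prod_null, no_lone_nonzero in *.
  repeat split; try tauto; intro i; apply (pnull_perm _ _ _ _ (H i)).
Qed.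

Lemma prod_null_mul a b c d : prod_null a b c ->
  prod_null (prod_mul d a) (prod_mul d b) (prod_mul d c).
Proof.
  intros [H Hz]. split.
  - intro i. rewrite !coord_mul. apply pnull_mul, H.
  - unfold no_lone_nonzero in *. rewrite !prod_mul_eq0. tauto.
Qed.

Lemma prod_null_zero a b : prod_null a b None <-> a = prod_neg b.
Proof.
  split.
  - intros [H Hz]. apply prod_ext.
    + rewrite prod_neg_eq0. unfold no_lone_nonzero in Hz. tauto.
    + intro i. rewrite coord_neg. apply pnull_zero, H.
  - intros ->. split.
    + intro i. apply pnull_zero, coord_neg.
    + unfold no_lone_nonzero. rewrite prod_neg_eq0. tauto.
Qed.

Definition prod_pasture : pasture :=
  Pasture prod_car None prod_one prod_mul prod_neg prod_null
    prod_mulA prod_mul1l prod_mul1r prod_mul0l prod_mul0r prod_one_neq0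
    prod_mul_neq0 prod_mulC_units prod_inv_ex prod_negK prod_neg0
    prod_null_perm prod_null_mul prod_null_zero.

Lemma coord_morphism j : is_pasture_morphism prod_pasture (P j) (fun a => coord a j).
Proof.
  repeat split.
  - intros a b. apply coord_mul.
  - intro a. apply coord_neg.
  - intros a b c [H _]. apply H.
Qed.

Section Lift.
Variable P' : pasture.
Variable f : forall i, P' -> P i.
Hypothesis Hf : forall i, is_pasture_morphism P' (P i) (f i).

Definition prod_lift (x : P') : prod_car :=
  match excluded_middle_informative (x = pzero) with
  | left _ => None
  | right Hx => tuple_of (fun i => f i x) (fun i fx0 => Hx (proj1 (morph_eq0 _ _ _ (Hf i) x) fx0))
  end.

Lemma coord_prod_lift i x : coord (prod_lift x) i = f i x.
Proof.
  unfold prod_lift. destruct excluded_middle_informative as [-> |]; [|reflexivity].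
  symmetry. apply (morph0 _ _ _ (Hf i)).
Qed.

Lemma prod_lift_eq0 x : prod_lift x = None <-> x = pzero.
Proof.
  unfold prod_lift. destruct excluded_middle_informative; split; easy.
Qed.

Lemma prod_lift_morphism : is_pasture_morphism P' prod_pasture prod_lift.
Proof.
  split; [|split; [|split; [|split]]].
  - intros a b. apply prod_ext.
    + simpl. rewrite prod_mul_eq0, !prod_lift_eq0, pmul_eq0. tauto.
    + intro i. simpl. rewrite coord_mul, !coord_prod_lift. apply (morph_mul _ _ _ (Hf i)).
  - now apply prod_lift_eq0.
  - apply prod_ext.
    + rewrite prod_lift_eq0. pose proof (pone_neq0 P'). pose proof prod_one_neq0. tauto.
    + intro i. rewrite coord_prod_lift. apply (morph1 _ _ _ (Hf i)).
  - intro a. apply prod_ext.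
    + simpl. rewrite prod_neg_eq0, !prod_lift_eq0, pneg_eq0. tauto.
    + intro i. simpl. rewrite coord_neg, !coord_prod_lift. apply (morph_neg _ _ _ (Hf i)).
  - intros a b c H. split.
    + intro i. rewrite !coord_prod_lift. apply (morph_null _ _ _ (Hf i)), H.
    + unfold no_lone_nonzero. rewrite !prod_lift_eq0. apply pnull_no_lone_nonzero, H.
Qed.

Lemma prod_lift_unique (g : P' -> prod_pasture) :
  is_pasture_morphism P' prod_pasture g ->
  (forall j x, coord (g x) j = f j x) -> forall x, g x = prod_lift x.
Proof.
  intros Hg Hcoord x. apply prod_ext.
  - rewrite prod_lift_eq0. exact (morph_eq0 _ _ _ Hg x).
  - intro i. rewrite Hcoord, coord_prod_lift. reflexivity.
Qed.

End Lift.
End ProductPasture.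

Theorem theorem6p5 (I : Type) (P : I -> pasture) :
  exists (Q : pasture) (pi : forall j : I, Q -> P j),
    (forall j, is_pasture_morphism Q (P j) (pi j)) /\
    forall (P' : pasture) (f : forall i : I, P' -> P i),
      (forall i, is_pasture_morphism P' (P i) (f i)) ->
      exists fstar : P' -> Q,
        is_pasture_morphism P' Q fstar /\
        (forall j x, pi j (fstar x) = f j x) /\
        (forall g : P' -> Q, is_pasture_morphism P' Q g ->
           (forall j x, pi j (g x) = f j x) -> forall x, g x = fstar x).
Proof.
  exists (prod_pasture I P), (fun j a => coord I P a j).
  split; [apply coord_morphism|].
  intros P' f Hf. exists (prod_lift I P P' f Hf).
  split; [apply prod_lift_morphism|].
  split; [apply coord_prod_lift | apply prod_lift_unique].
Qed.
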